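(* Let $T_1=(Q_1,\Sigma,\Delta,R_1,q_1^0)$ and $T_2=(Q_2,\Delta,\Omega,R_2,q_2^0)$ be top-down tree transducers, let $\hat{T}_1$ be the product construction of $T_1$ and the domain automaton of $T_2$, and let $M$ be the look-ahead transducer constructed from $T_1$ and $T_2$ as described in the context. Then $\mathcal{R}(\hat{T}_1)\circ\mathcal{R}(T_2)\subseteq\mathcal{R}(M)$.
   Context: A top-down tree transducer $T=(Q,\Sigma,\Delta,R,q_0)$ has finite state set $Q$, ranked input/output alphabets $\Sigma,\Delta$, initial state $q_0$, and finite rule set $R$ of rules $q(a(x_1,\dots,x_k))\to t$ with $a\in\Sigma_k$ ($\Sigma_k$ = symbols of rank $k$) and $t$ a tree over $\Delta$ whose leaves may additionally be of the form $q'(x_i)$, $q'\in Q$, $i\in[k]$; rules are used as rewrite rules in the usual way. $\mathcal{R}(T)$ is the set of pairs $(s,t)$ with $t$ a tree over $\Delta$ derivable from $q_0(s)$; $\mathcal{R}_1\circ\mathcal{R}_2=\{(s,u)\mid\exists t:(s,t)\in\mathcal{R}_1,(t,u)\in\mathcal{R}_2\}$. For $q\in Q$, $a\in\Sigma_k$, $\text{rhs}_T(q,a)$ is the set of right-hand sides of rules with left-hand side $q(a(x_1,\dots,x_k))$; for a right-hand side $\xi$ (resp. a set $\Gamma$ of right-hand sides), $\xi[x_i]$ (resp. $\Gamma[x_i]$) is the set of states $q'$ such that $q'(x_i)$ occurs in $\xi$ (resp. in some tree of $\Gamma$). Domain automaton of $T$: the top-down tree automaton (transducer over $\Sigma$ with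 rules of the form $p(a(x_1,\dots,x_k))\to a(p_1(x_1),\dots,p_k(x_k))$) with states all subsets of $Q$, initial state $\{q_0\}$, rules $S(a(x_1,\dots,x_k))\to a(S_1(x_1),\dots,S_k(x_k))$ for every $a\in\Sigma_k$, nonempty $S=\{q_1,\dots,q_n\}\subseteq Q$ and nonempty $\Gamma_j\subseteq\text{rhs}_T(q_j,a)$ ($j\in[n]$), where $S_i=\bigcup_j\Gamma_j[x_i]$, and rules $\emptyset(a(x_1,\dots,x_k))\to a(\emptyset(x_1),\dots,\emptyset(x_k))$ for all $a$; for an automaton state $l$, $\text{dom}(l)$ is the set of trees accepted from $l$. Product construction of transducers $T=(Q,\Sigma,\Delta,R,q_0)$ and $T'=(Q',\Delta,\Omega,R',q'_0)$: the transducer with states $Q\times Q'$, initial state $(q_0,q'_0)$, and, for every rule $q(a(x_1,\dots,x_k))\to\xi$ of $T$, every $p\in Q'$ and every tree $\zeta$ derivable from $p(\xi)$ using rules of $T'$ in which the leaves of $\xi$ of the form $q''(x_i)$ are treated as unrewritable symbols and a state $p'$ applied to such a leaf stays as $p'(q''(x_i))$, the rule $(q,p)(a(x_1,\dots,x_k))\to\zeta'$ (said to be obtained from the rule $q(a(x_1,\dots,x_k))\to\xi$ by translating $\xi$ with $p$), where $\zeta'$ replaces each $p'(q''(x_i))$ by $(q'',p')(x_i)$. A top-down tree transducer with look-ahead is a tuple $(Q,\Sigma,\Delta,R,q_0,B)$ where $B$ is a top-down tree automaton over $\Sigma$ with state set $L$ and rules have the form $q(a(x_1\!:\!l_1,\dots,x_k\!:\!l_k))\to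 t$ with $l_i\in L$; on input $s$, each node $v$ with label $a\in\Sigma_k$ is first relabeled by $\langle a,l_1,\dots,l_k\rangle$ where $l_i\in L$ are such that the $i$-th subtree of $v$ is in $\text{dom}(l_i)$, and the relabeled tree is then processed reading each rule as $q(\langle a,l_1,\dots,l_k\rangle(x_1,\dots,x_k))\to t$; the relation consists of all pairs $(s,r)$ with $r$ obtainable this way. Construction of $M$: let $\hat{T}_1$ be the product construction of $T_1$ and the domain automaton of $T_2$ (states written $(q,S)$ with $q\in Q_1$, $S\subseteq Q_2$), and $N$ the product construction of $\hat{T}_1$ and $T_2$ (states written $(q,S,q')$). The states of $M$ are the $(q,S,q')$ with $q'\in S$; its initial state is $(q_1^0,\{q_2^0\},q_2^0)$; its look-ahead automaton is the domain automaton $\hat{A}$ of $\hat{T}_1$. For every rule $(q,S,q')(a(x_1,\dots,x_k))\to\gamma$ of $N$ involving only such states, obtained from the rule $(q,S)(a(x_1,\dots,x_k))\to\xi$ of $\hat{T}_1$ by translating $\xi$ with $q'$, and for all states $l_1,\dots,l_k$ of $\hat{A}$ with $\xi[x_i]\subseteq l_i$ ($i\in[k]$), $M$ has the rule $(q,S,q')(a(x_1\!:\!l_1,\dots,x_k\!:\!l_k))\to\gamma$. *)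

From mathcomp Require Import all_boot.
From Stdlib Require Import Relations.Relation_Operators.
From Stdlib Require List.

Set Implicit Arguments.
Unset Strict Implicit.
Unset Printing Implicit Defensive.

Inductive tree (F : Type) : Type := Node of F & seq (tree F).
Arguments Node {F}.

Fixpoint tmap (A B : Type) (f : A -> B) (t : tree A) : tree B :=
  let: Node a ts := t in Node (f a) (map (tmap f) ts).

Fixpoint wr (F : Type) (rk : F -> nat) (t : tree F) : bool :=
  let: Node a ts := t in (size ts == rk a) && all (wr rk) ts.

Inductive occurs (F : Type) (x : F) : tree F -> Prop :=
| occ_here ts : occurs x (Node x ts)
| occ_sub y ts u : List.In u ts -> occurs x u -> occurs x (Node y ts).

(* Right-hand sides: trees over D whose leaves may be q(x_i),        *)
(* encoded as the label inr (q, i) (variables x_1..x_k are indexed   *)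
(* 0..k-1 here).                                                      *)
Definition rhs (Q D : Type) := tree (D + Q * nat).

Fixpoint rhs_wf (Q D : Type) (rkD : D -> nat) (k : nat) (t : rhs Q D) : bool :=
  match t with
  | Node (inl d) ts => (size ts == rkD d) && all (rhs_wf rkD k) ts
  | Node (inr (_, i)) ts => (i < k) && nilp ts
  end.

Fixpoint leafy (A B : Type) (t : tree (A + B)) : bool :=
  match t with
  | Node (inl _) ts => all (@leafy A B) ts
  | Node (inr _) ts => nilp ts
  end.

Record tdtt (Q : Type) (L D : Type) := TDTT {
  rule : Q -> L -> rhs Q D -> Prop;   (* rule q(a(x1..xk)) -> t *)
  init : Q }.
Arguments TDTT {Q L D}.

Definition wf_tdtt (Q : Type) (L D : Type) (rkL : L -> nat) (rkD : D -> nat)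
    (T : tdtt Q L D) : Prop :=
  (forall q a t, rule T q a t -> rhs_wf rkD (rkL a) t) /\
  (exists rs : list (Q * L * rhs Q D),
      forall q a t, rule T q a t -> List.In (q, a, t) rs).

(* sentential forms: output symbols, and unevaluated calls q(s)       *)
Definition sform (Q L D : Type) := tree (D + Q * tree L).

Definition call (Q L D : Type) (q : Q) (s : tree L) : sform Q L D :=
  Node (inr (q, s)) [::].
Arguments call {Q L D}.

Fixpoint inst (Q L D : Type) (ss : seq (tree L)) (u : tree L) (t : rhs Q D)
  : sform Q L D :=
  match t with
  | Node (inl d) ts => Node (inl d) (map (inst ss u) ts)
  | Node (inr (q, i)) _ => Node (inr (q, nth u ss i)) [::]
  end.
Arguments inst {Q L D}.

Inductive step (Q L D : Type) (T : tdtt Q L D) : sform Q L D -> sform Q L D -> Prop :=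
| step_rule q a ss t : rule T q a t ->
    step T (call q (Node a ss)) (inst ss (Node a ss) t)
| step_ctx x ts1 u u' ts2 : step T u u' ->
    step T (Node x (ts1 ++ u :: ts2)) (Node x (ts1 ++ u' :: ts2)).

Definition derives (Q L D : Type) (T : tdtt Q L D) (q : Q) (s : tree L)
    (t : tree D) : Prop :=
  clos_refl_trans _ (@step Q L D T) (call q s) (tmap inl t).

Definition tdtt_rel (Q L D : Type) (rkL : L -> nat) (rkD : D -> nat)
    (T : tdtt Q L D) (s : tree L) (t : tree D) : Prop :=
  wr rkL s /\ wr rkD t /\ derives T (init T) s t.

(* T' running on right-hand sides of T: leaves q''(x_i) are symbols   *)
(* with no rules.                                                      *)
Definition ext_tdtt (Q Q' D O : Type) (T' : tdtt Q' D O) : tdtt Q' (D + Q * nat) O :=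
  TDTT (fun p x t => match x with inl d => rule T' p d t | inr _ => False end)
       (init T').
Arguments ext_tdtt {Q Q' D O}.

(* zeta' -> zeta : (q'',p')(x_i) is written back as p'(q''(x_i)) *)
Fixpoint embed (Q Q' D O : Type) (z : rhs (Q * Q') O) : sform Q' (D + Q * nat) O :=
  match z with
  | Node (inl w) ts => Node (inl w) (map (@embed Q Q' D O) ts)
  | Node (inr ((q'', p'), i)) _ => Node (inr (p', Node (inr (q'', i)) [::])) [::]
  end.
Arguments embed {Q Q' D O}.

Definition translates (Q Q' D O : Type) (T' : tdtt Q' D O) (p : Q')
    (xi : rhs Q D) (z : rhs (Q * Q') O) : Prop :=
  leafy z /\
  clos_refl_trans _ (@step Q' (D + Q * nat) O (@ext_tdtt Q Q' D O T'))
    (call p xi) (embed z).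

Definition product (Q Q' L D O : Type) (T : tdtt Q L D) (T' : tdtt Q' D O)
  : tdtt (Q * Q') L O :=
  TDTT (fun qp a z => exists xi, rule T qp.1 a xi /\ translates T' qp.2 xi z)
       (init T, init T').

Definition aut_rhs (P L : Type) (a : L) (dflt : P) (Ss : seq P) : rhs P L :=
  Node (inl a) [seq Node (inr (nth dflt Ss i, i)) [::] | i <- iota 0 (size Ss)].

Definition dom_rule (Q : finType) (L D : Type) (T : tdtt Q L D)
    (S : {set Q}) (a : L) (Ss : seq {set Q}) : Prop :=
  (S = set0 /\ forall i, i < size Ss -> nth set0 Ss i = set0) \/
  (S != set0 /\
   exists Gamma : Q -> rhs Q D -> Prop,
     (forall q, q \in S ->
        (exists xi, Gamma q xi) /\ (forall xi, Gamma q xi -> rule T q a xi)) /\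
     (forall i, i < size Ss -> forall q',
        q' \in nth set0 Ss i <->
        exists q, q \in S /\ exists xi, Gamma q xi /\ occurs (inr (q', i)) xi)).

Definition domA (Q : finType) (L D : Type) (rkL : L -> nat) (T : tdtt Q L D)
  : tdtt {set Q} L L :=
  TDTT (fun S a t => exists Ss : seq {set Q},
          size Ss = rkL a /\ t = aut_rhs a set0 Ss /\ dom_rule T S a Ss)
       [set init T].

Definition accepts (P L : Type) (B : tdtt P L L) (l : P) (s : tree L) : Prop :=
  exists t, derives B l s t.

Record latdtt (Q LB : Type) (L D : Type) := LATDTT {
  la_rule : Q -> L -> seq LB -> rhs Q D -> Prop;
    (* rule q(a(x1:l1,...,xk:lk)) -> t, with [l1;...;lk] *)
  la_init : Q;
  la_aut : tdtt LB L L }.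
Arguments LATDTT {Q LB L D}.

Inductive relab (LB L : Type) (B : tdtt LB L L) : tree L -> tree (L * seq LB) -> Prop :=
| relab_node a ss ls ss' :
    List.Forall2 (accepts B) ls ss -> List.Forall2 (relab B) ss ss' ->
    relab B (Node a ss) (Node (a, ls) ss').

Definition la_tdtt (Q LB L D : Type) (M : latdtt Q LB L D) : tdtt Q (L * seq LB) D :=
  TDTT (fun q al t => la_rule M q al.1 al.2 t) (la_init M).

Definition la_rel (Q LB L D : Type) (rkL : L -> nat) (rkD : D -> nat)
    (M : latdtt Q LB L D) (s : tree L) (r : tree D) : Prop :=
  wr rkL s /\ wr rkD r /\
  exists s', relab (la_aut M) s s' /\ derives (la_tdtt M) (la_init M) s' r.

Section Construction.
Variables (Q1 Q2 : finType) (S D O : Type).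
Variables (rkS : S -> nat) (rkD : D -> nat).
Variables (T1 : tdtt Q1 S D) (T2 : tdtt Q2 D O).

Definition That : tdtt (Q1 * {set Q2}) S D := product T1 (domA rkD T2).

Definition N : tdtt (Q1 * {set Q2} * Q2) S O := product That T2.

Definition MQ := {x : Q1 * {set Q2} * Q2 | x.2 \in x.1.2}.

Definition MQ0 : MQ :=
  exist (fun x : Q1 * {set Q2} * Q2 => x.2 \in x.1.2)
        (init T1, [set init T2], init T2) (set11 (init T2)).

Definition rmap_val (g : rhs MQ O) : rhs (Q1 * {set Q2} * Q2) O :=
  tmap (fun x => match x with inl w => inl w | inr (st, i) => inr (val st, i) end) g.

Definition M_rule (x : MQ) (a : S) (ls : seq {set Q1 * {set Q2}}) (g : rhs MQ O)
  : Prop :=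
  let: (qS, q') := val x in
  size ls = rkS a /\
  exists xi : rhs (Q1 * {set Q2}) D,
    rule That qS a xi /\
    translates T2 q' xi (rmap_val g) /\
    (forall i st, i < size ls -> occurs (inr (st, i)) xi -> st \in nth set0 ls i).

Definition M : latdtt MQ {set Q1 * {set Q2}} S O :=
  LATDTT M_rule MQ0 (domA rkS That).

End Construction.

(* A run of [That] from [(q, S)] is in particular a run of [T1] from [q]. Conversely, take a
   run of [T1] on [s] with output [t] and a family [R] of runs of [T2] on [t]. By induction on
   [s], and inside each rule of [T1] on its right-hand side, the run of [That] is rebuilt so
   that the set attached to each call is exactly the set of [T2]-states with which the runs
   of [R] enter the corresponding subtree of [t]: at an output symbol, the domain-automaton
   rule takes for [Gamma_p] the rules of [T2] actually used by the runs of [R] from [p]. With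
   these sets, translating a right-hand side of [That] with the [T2]-rule used by a run gives
   a rule of [M] whose look-ahead condition holds for the relabelling of [s] by the sets of
   [That]-states having a run on each subtree, so [M] simulates every run of [R]. The theorem
   is the case [R = {(q2_0, u)}]. Derivations are taken in big-step form ([bigstep]), which
   makes all these inductions structural. *)

From mathcomp Require Import all_boot.
From Stdlib Require Import Relations.Relation_Operators Relations.Operators_Properties.
From Stdlib Require List ClassicalEpsilon.

Set Implicit Arguments.
Unset Strict Implicit.
Unset Printing Implicit Defensive.

Section TreeInd.
Variables (F : Type) (P : tree F -> Prop).
Hypothesis P_Node : forall a ts, (forall t, List.In t ts -> P t) -> P (Node a ts).

Fixpoint tree_ind_nested (t : tree F) : P t :=
  let: Node a ts := t in
  P_Node a ((fix In_ind (l : seq (tree F)) : forall x, List.In x l -> P x :=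
    match l with
    | [::] => fun x (hx : List.In x [::]) => False_ind _ hx
    | y :: l' => fun x hx => match hx with
                 | or_introl e => eq_ind y P (tree_ind_nested y) x e
                 | or_intror h => In_ind l' x h end
    end) ts).
End TreeInd.

Lemma In_nth (A : Type) (x0 : A) s i : i < size s -> List.In (nth x0 s i) s.
Proof. by elim: s i => [|y s IHs] [|i] //= lt_i; [left | right; apply: IHs]. Qed.

Lemma In_nthP (A : Type) (s : seq A) x :
  List.In x s -> exists2 i, i < size s & forall x0, x = nth x0 s i.
Proof.
elim: s => [|y s IHs] //= [->|/IHs[i lt_i nth_i]]; first by exists 0.
by exists i.+1.
Qed.

Lemma all_In (A : Type) (p : pred A) s x : all p s -> List.In x s -> p x.
Proof.
move=> p_s x_s; have [i lt_i /(_ x) ->] := In_nthP x_s.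
by apply/(all_nthP x): i lt_i.
Qed.

Lemma In_all (A : Type) (p : pred A) s : (forall x, List.In x s -> p x) -> all p s.
Proof.
elim: s => //= y s IHs p_s; rewrite p_s /=; last by left.
by apply: IHs => x s_x; apply: p_s; right.
Qed.

Lemma Forall2_nthP (A B : Type) (R : A -> B -> Prop) xs ys :
  List.Forall2 R xs ys <->
  size xs = size ys /\ forall i x0 y0, i < size xs -> R (nth x0 xs i) (nth y0 ys i).
Proof.
split.
  elim=> [|x y {}xs {}ys Rxy _ [eq_sz Rs]] //=; split; first by rewrite eq_sz.
  by move=> [|i] x0 y0 //= lt_i; apply: Rs.
elim: xs ys => [|x xs IHxs] [|y ys] [//= eq_sz Rs]; constructor; first exact: (Rs 0).
by apply: IHxs; split=> [|i x0 y0]; [case: eq_sz | apply: (Rs i.+1)].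
Qed.

Lemma nth_choice (A : Type) (R : nat -> A -> Prop) n :
  (forall i, i < n -> exists y, R i y) ->
  exists ys : seq A, size ys = n /\ forall i y0, i < n -> R i (nth y0 ys i).
Proof.
elim: n => [|n IHn] R_ex; first by exists [::].
have [|ys [sz_ys R_ys]] := IHn; first by move=> i /ltnW; apply: R_ex.
have [y R_y] := R_ex n (ltnSn n).
exists (rcons ys y); split=> [|i y0 lt_i]; first by rewrite size_rcons sz_ys.
rewrite nth_rcons sz_ys; case: ltnP => [lt_in|le_ni]; first exact: R_ys.
have -> : i = n by apply/eqP; rewrite eqn_leq le_ni -ltnS lt_i.
by rewrite eqxx.
Qed.

Definition asbool (P : Prop) : bool :=
  if ClassicalEpsilon.excluded_middle_informative P then true else false.

Lemma asboolP (P : Prop) : reflect P (asbool P).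
Proof.
by rewrite /asbool; case: ClassicalEpsilon.excluded_middle_informative => ?; constructor.
Qed.

Lemma tmap_inlE (A B : Type) (t : tree A) a ys :
  tmap (@inl A B) t = Node (inl a) ys -> exists2 ts, t = Node a ts & ys = map (tmap inl) ts.
Proof. by case: t => b ts [-> <-]; exists ts. Qed.

Lemma occurs_leafE (F : Type) (x y : F) : occurs x (Node y [::]) -> x = y.
Proof. by move=> occ; inversion occ. Qed.

Lemma occurs_inlE (A B : Type) (z : B) (a : A) xs :
  occurs (inr z) (Node (inl a) xs) -> exists2 x, List.In x xs & occurs (inr z) x.
Proof. by move=> occ; inversion occ; exists u. Qed.

Lemma rhs_wf_leafy (Q D : Type) (rk : D -> nat) k (xi : rhs Q D) :
  rhs_wf rk k xi -> leafy xi.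
Proof.
elim/tree_ind_nested: xi => [[d|[q i]] ts IH] /=; last by case/andP.
by case/andP=> _ wf_ts; apply: In_all => x ts_x; apply/IH/(all_In wf_ts).
Qed.

Lemma occurs_rhs_wf (Q D : Type) (rk : D -> nat) k (xi : rhs Q D) q i :
  occurs (inr (q, i)) xi -> rhs_wf rk k xi -> i < k.
Proof.
elim=> [ts|[d|[q' i']] ts x ts_x _ IH] /=; first by case/andP.
  by case/andP=> _ wf_ts; apply/IH/(all_In wf_ts).
by case/andP=> _ /nilP ts0; rewrite ts0 in ts_x.
Qed.

Section BigStep.
Variables (Q L D : Type) (T : tdtt Q L D).

Inductive bigstep : sform Q L D -> sform Q L D -> Prop :=
| bigstep_node x ts ys :
    List.Forall2 bigstep ts ys -> bigstep (Node x ts) (Node x ys)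
| bigstep_call q a ss xi y :
    rule T q a xi -> bigstep (inst ss (Node a ss) xi) y -> bigstep (call q (Node a ss)) y.

Section BigStepInd.
Variable P : sform Q L D -> sform Q L D -> Prop.
Hypothesis P_node : forall x ts ys, List.Forall2 P ts ys -> P (Node x ts) (Node x ys).
Hypothesis P_call : forall q a ss xi y,
  rule T q a xi -> P (inst ss (Node a ss) xi) y -> P (call q (Node a ss)) y.

Fixpoint bigstep_ind_nested x y (xy : bigstep x y) {struct xy} : P x y :=
  match xy with
  | bigstep_node x ts ys tys => P_node x
     ((fix Forall2_ind ts ys (tys : List.Forall2 bigstep ts ys) : List.Forall2 P ts ys :=
        match tys with
        | List.Forall2_nil => List.Forall2_nil _
        | List.Forall2_cons t y ts ys ty tys =>
            List.Forall2_cons _ _ (bigstep_ind_nested ty) (Forall2_ind _ _ tys)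
        end) ts ys tys)
  | bigstep_call q a ss xi y r xy => P_call r (bigstep_ind_nested xy)
  end.
End BigStepInd.

Lemma bigstep_refl x : bigstep x x.
Proof.
elim/tree_ind_nested: x => a ts IH; constructor.
by apply/Forall2_nthP; split=> // i x0 y0 lt_i; rewrite (set_nth_default x0); [apply/IH/In_nth|].
Qed.

Lemma step_bigstep x y z : step T x y -> bigstep y z -> bigstep x z.
Proof.
move=> xy; elim: xy z => [q a ss t r|x' ts1 u u' ts2 _ IH] z yz; first exact: bigstep_call r yz.
inversion yz as [x1 ts ys tys|]; subst; last by destruct ts1.
move/Forall2_nthP: tys => [eq_sz tys].
constructor; apply/Forall2_nthP; split=> [|i x0 y0 lt_i]; first by move: eq_sz; rewrite !size_cat.
have lt_i' : i < size (ts1 ++ u' :: ts2) by rewrite !size_cat in lt_i *.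
move: (tys i x0 y0 lt_i'); rewrite !nth_cat; case: ifP => // _.
by case: (i - size ts1) => [|k] //=; apply: IH.
Qed.

Let steps := clos_refl_trans _ (step T).

Lemma steps_ctx x ts1 u u' ts2 :
  steps u u' -> steps (Node x (ts1 ++ u :: ts2)) (Node x (ts1 ++ u' :: ts2)).
Proof.
elim=> [v v' vv'|v|v v' v'' _ IH1 _ IH2]; last exact: rt_trans IH1 IH2.
  by apply/rt_step/step_ctx.
exact: rt_refl.
Qed.

Lemma bigstepP x y : steps x y <-> bigstep x y.
Proof.
split=> [xy|].
  elim: (clos_rt_rt1n _ _ _ _ xy) => [|? ? ? xz _]; first exact: bigstep_refl.
  exact: step_bigstep xz.
elim/bigstep_ind_nested => [x' ts ys Ptys|q a ss xi y' r IH]; last first.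
  by apply: rt_trans IH; apply/rt_step/step_rule.
suff steps_suffix pre : steps (Node x' (pre ++ ts)) (Node x' (pre ++ ys)).
  exact: (steps_suffix [::]).
elim: Ptys pre => [|t y' {}ts {}ys ty _ IH] pre; first exact: rt_refl.
apply: rt_trans (steps_ctx x' pre ts ty) _.
by have := IH (rcons pre y'); rewrite -!cats1 -!catA.
Qed.

Arguments bigstepP {x y}.

Definition runs q s (t : tree D) := bigstep (call q s) (tmap inl t).

Lemma derivesP q s t : derives T q s t <-> runs q s t.
Proof. exact: bigstepP. Qed.
Arguments derivesP {q s t}.

Lemma bigstep_callE q s y : bigstep (call q s) y ->
  y = call q s \/
  exists a ss xi, [/\ s = Node a ss, rule T q a xi & bigstep (inst ss (Node a ss) xi) y].
Proof.
move=> sy; inversion sy as [x ts ys tys|]; subst; last by right; exists a, ss, xi.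
by left; inversion tys.
Qed.

Lemma runs_NodeE q a ss t : runs q (Node a ss) t ->
  exists2 xi, rule T q a xi & bigstep (inst ss (Node a ss) xi) (tmap inl t).
Proof. by case/bigstep_callE=> [|[a' [ss' [xi [[<- <-] r st]]]]]; [case: t | exists xi]. Qed.

Lemma bigstep_inlE d ts y : bigstep (Node (inl d) ts) y ->
  exists2 ys, y = Node (inl d) ys & List.Forall2 bigstep ts ys.
Proof. by move=> ty; inversion ty; exists ys. Qed.

Lemma bigstep_inst_inlE ss w d xs (t : tree D) :
  bigstep (inst ss w (Node (inl d) xs)) (tmap inl t) ->
  exists2 ts, t = Node d ts &
    List.Forall2 (fun x t => bigstep (inst ss w x) (tmap inl t)) xs ts.
Proof.
case/bigstep_inlE=> ys eq_t /Forall2_nthP[]; have [ts -> ->] := tmap_inlE eq_t.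
rewrite !size_map => eq_sz xts.
exists ts => //; apply/Forall2_nthP; split=> // i x0 t0 lt_i.
by have := xts i (inst ss w x0) (tmap inl t0) lt_i; rewrite (nth_map x0) // (nth_map t0) -?eq_sz.
Qed.

Lemma bigstep_inst_ind ss w (P : rhs Q D -> tree D -> Prop) :
  (forall q i ch u, runs q (nth w ss i) u -> P (Node (inr (q, i)) ch) u) ->
  (forall d xs us, List.Forall2 P xs us -> P (Node (inl d) xs) (Node d us)) ->
  forall xi u, bigstep (inst ss w xi) (tmap inl u) -> P xi u.
Proof.
move=> P_call P_node; elim/tree_ind_nested => [[d|[q i]] xs IH] u; last exact: P_call.
case/bigstep_inst_inlE => us -> /Forall2_nthP[eq_sz xus]; apply/P_node/Forall2_nthP.
by split=> // j x0 u0 lt_j; apply: IH (In_nth _ lt_j) _ (xus _ _ _ lt_j).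
Qed.

Lemma runs_of_occurs ss w xi q i u :
  bigstep (inst ss w xi) (tmap inl u) -> leafy xi -> occurs (inr (q, i)) xi ->
  exists u', runs q (nth w ss i) u'.
Proof.
move: xi u; apply: bigstep_inst_ind => [q' i' ch u run|d xs us] /=.
  by move=> /nilP-> occ; case: (occurs_leafE occ) => -> ->; exists u.
move=> /Forall2_nthP[eq_sz Pxs] leafy_xs occ.
have [x xs_x occ_x] := occurs_inlE occ; have [j lt_j /(_ x) eq_x] := In_nthP xs_x.
have := Pxs j x (Node d us) lt_j; rewrite -eq_x; apply=> //.
exact: all_In leafy_xs xs_x.
Qed.

End BigStep.

Definition states_of (Q : finType) (O : Type) (R : Q -> O -> Prop) : {set Q} :=
  [set q | asbool (exists u, R q u)].

Lemma states_ofP (Q : finType) (O : Type) (R : Q -> O -> Prop) q :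
  reflect (exists u, R q u) (q \in states_of R).
Proof. by rewrite inE; apply: asboolP. Qed.

Lemma inst_aut_rhs (P L D : Type) (ss : seq (tree L)) w (a : D) (dflt : P) Ss :
  inst ss w (aut_rhs a dflt Ss) =
  Node (inl a) (mkseq (fun i => call (nth dflt Ss i) (nth w ss i)) (size Ss)).
Proof. by rewrite /aut_rhs /= -map_comp. Qed.

Section DomainAutomaton.
Variables (Q : finType) (L D : Type) (rk : L -> nat) (T : tdtt Q L D).

Definition child_states (S : {set Q}) (Gamma : Q -> rhs Q D -> Prop) n : seq {set Q} :=
  mkseq (fun i => [set q' | asbool
    (exists q, q \in S /\ exists xi, Gamma q xi /\ occurs (inr (q', i)) xi)]) n.

Lemma nth_child_states (S : {set Q}) Gamma n i q' : i < n ->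
  q' \in nth set0 (child_states S Gamma n) i <->
  exists q, q \in S /\ exists xi, Gamma q xi /\ occurs (inr (q', i)) xi.
Proof. by move=> lt_i; rewrite nth_mkseq // inE; split=> /asboolP. Qed.

Lemma dom_ruleI (S : {set Q}) a n (Gamma : Q -> rhs Q D -> Prop) :
  (forall q, q \in S -> exists xi, Gamma q xi) -> (forall q xi, Gamma q xi -> rule T q a xi) ->
  dom_rule T S a (child_states S Gamma n).
Proof.
move=> Gamma_ex Gamma_rule; case: (eqVneq S set0) => [S0|S_neq0]; [left|right].
  split=> [//|i]; rewrite size_mkseq => lt_i; apply/setP=> q'; rewrite in_set0.
  by apply/negbTE/negP => /(nth_child_states _ _ _ lt_i)[q []]; rewrite S0 in_set0.
split=> //; exists Gamma; split=> [q /Gamma_ex|i]; first by split=> // xi /Gamma_rule.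
by rewrite size_mkseq => lt_i q'; apply: nth_child_states.
Qed.

Definition used_rules (R : Q -> tree D -> Prop) a ws q xi := exists t,
  [/\ R q t, rule T q a xi & bigstep T (inst ws (Node a ws) xi) (tmap inl t)].

Lemma dom_rule_used_rules (S : {set Q}) R a ws n :
  (forall q, q \in S -> exists2 t, R q t & runs T q (Node a ws) t) ->
  dom_rule T S a (child_states S (used_rules R a ws) n).
Proof.
move=> S_runs; apply: dom_ruleI => [q /S_runs[t Rqt run]|q xi [t []] //].
by have [xi r xi_t] := runs_NodeE run; exists xi, t.
Qed.

Section Translation.
Variable P : Type.
Local Notation ext := (@ext_tdtt P _ _ _ (domA rk T)).

Lemma translate_dom_node S d (ts : seq (rhs P L)) Ss (xis : seq (rhs (P * {set Q}) L)) :
  size Ss = rk d -> dom_rule T S d Ss -> size ts = size Ss -> size xis = size Ss ->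
  (forall i x0 y0, i < size Ss ->
     bigstep ext (call (nth set0 Ss i) (nth x0 ts i)) (embed (nth y0 xis i))) ->
  bigstep ext (call S (Node (inl d) ts)) (embed (Node (inl d) xis)).
Proof.
move=> sz_Ss r sz_ts sz_xis xis_ok; apply: (bigstep_call (xi := aut_rhs d set0 Ss)).
  by exists Ss.
rewrite inst_aut_rhs; apply/bigstep_node/Forall2_nthP.
rewrite size_mkseq size_map sz_xis; split=> // i x0 y0 lt_i.
by rewrite nth_mkseq // (nth_map (Node (inl d) xis)) ?sz_xis //; apply: xis_ok.
Qed.

Lemma translate_dom_nodeE S d (ts : seq (rhs P L)) (xi : rhs (P * {set Q}) L) :
  size ts = rk d -> bigstep ext (call S (Node (inl d) ts)) (embed xi) ->
  exists Ss xis, [/\ size Ss = rk d, xi = Node (inl d) xis, size xis = size Ss &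
    forall i x0 y0, i < size Ss ->
      bigstep ext (call (nth set0 Ss i) (nth x0 ts i)) (embed (nth y0 xis i))].
Proof.
move=> sz_ts run; case: (bigstep_callE run) => {run}
  [|[_ [_ [_ [[<- <-] [Ss [sz_Ss [-> _]]] run]]]]]; first by case: xi => [[w|[[q' p'] i]] ch].
rewrite inst_aut_rhs in run; have [ys eq_ys /Forall2_nthP[]] := bigstep_inlE run.
case: xi eq_ys {run} => [[w|[[q' p'] j]] xis] //= [-> <-].
rewrite size_mkseq size_map => sz_xis xis_ok.
exists Ss, xis; split=> // i x0 y0 lt_i.
rewrite -sz_Ss in sz_ts; rewrite (set_nth_default (Node (inl d) ts)) ?sz_ts //.
by have := xis_ok i (call set0 x0) (embed y0) lt_i; rewrite nth_mkseq // (nth_map y0) -?sz_xis.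
Qed.

Lemma translate_dom_leafE S q i (xi : rhs (P * {set Q}) L) :
  bigstep ext (call S (Node (inr (q, i)) [::])) (embed xi) ->
  exists ch, xi = Node (inr ((q, S), i)) ch.
Proof.
move=> run; case: (bigstep_callE run) => {run} [|[_ [_ [_ [[<- _] []]]]]].
by case: xi => [[w|[[q' p'] j]] ch] //= [-> -> ->]; exists ch.
Qed.

End Translation.

Hypothesis T_leafy : forall q a xi, rule T q a xi -> leafy xi.

Lemma child_states_runs S R a ws n i q' : i < n ->
  q' \in nth set0 (child_states S (used_rules R a ws) n) i ->
  exists t, runs T q' (nth (Node a ws) ws i) t.
Proof.
move=> lt_i /(nth_child_states _ _ _ lt_i)[q [_ [xi [[t [_ r xi_t]] occ]]]].
exact: runs_of_occurs xi_t (T_leafy r) occ.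
Qed.

Definition dom_states (w : tree L) : {set Q} := states_of (fun q t => runs T q w t).

Fixpoint la_relabel (w : tree L) : tree (L * seq {set Q}) :=
  let: Node a ws := w in Node (a, map dom_states ws) (map la_relabel ws).

Lemma domA_runs (S : {set Q}) w : wr rk w ->
  (forall q, q \in S -> exists t, runs T q w t) -> exists t, runs (domA rk T) S w t.
Proof.
elim/tree_ind_nested: w S => a ws IH S /= /andP[/eqP sz_ws wr_ws] S_runs.
pose Ss := child_states S (used_rules (fun _ _ => True) a ws) (size ws).
have child_runs i : i < size ws ->
    exists t, runs (domA rk T) (nth set0 Ss i) (nth (Node a ws) ws i) t.
  move=> lt_i; apply: IH; [exact: In_nth | exact: all_In wr_ws (In_nth _ lt_i) |].
  by move=> q'; apply: child_states_runs.
have [ts [sz_ts ts_ok]] := nth_choice child_runs.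
exists (Node a ts); apply: (bigstep_call (xi := aut_rhs a set0 Ss)).
  exists Ss; split; [by rewrite size_mkseq | split=> //; apply: dom_rule_used_rules].
  by move=> q /S_runs[t run]; exists t.
have sz_Ss : size Ss = size ws by rewrite size_mkseq.
rewrite inst_aut_rhs sz_Ss; apply/bigstep_node/Forall2_nthP; rewrite size_mkseq size_map sz_ts.
split=> // i x0 y0 lt_i; rewrite nth_mkseq // (nth_map (Node a ts)) ?sz_ts //.
exact: ts_ok.
Qed.

Lemma relab_la_relabel w : wr rk w -> relab (domA rk T) w (la_relabel w).
Proof.
elim/tree_ind_nested: w => a ws IH /= /andP[_ wr_ws]; constructor.
  apply/Forall2_nthP; rewrite size_map; split=> // i l0 w0 lt_i.
  rewrite (nth_map w0) //; have wr_i := all_In wr_ws (In_nth w0 lt_i).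
  have [|t run] := domA_runs (S := dom_states (nth w0 ws i)) wr_i; first by move=> q /states_ofP.
  by exists t; apply/derivesP.
apply/Forall2_nthP; rewrite size_map; split=> // i w0 r0 lt_i.
by rewrite (nth_map w0) //; apply/IH/(all_In wr_ws); apply: In_nth.
Qed.
End DomainAutomaton.

Section Composition.
Variables (Q1 Q2 Sg Dl Om : finType) (rkS : Sg -> nat) (rkD : Dl -> nat) (rkO : Om -> nat).
Variables (T1 : tdtt Q1 Sg Dl) (T2 : tdtt Q2 Dl Om).
Hypothesis T1_wf : forall q a xi, rule T1 q a xi -> rhs_wf rkD (rkS a) xi.
Hypothesis T2_wf : forall p d xi, rule T2 p d xi -> rhs_wf rkO (rkD d) xi.

Local Notation ST := (Q1 * {set Q2})%type.
Local Notation TH := (That rkD T1 T2).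
Local Notation MT := (la_tdtt (M rkS rkD T1 T2)).
Local Notation extA := (@ext_tdtt Q1 _ _ _ (domA rkD T2)).
Local Notation ext2 := (@ext_tdtt ST _ _ _ T2).

Lemma T2_leafy p d xi : rule T2 p d xi -> leafy xi.
Proof. by move/T2_wf/rhs_wf_leafy. Qed.

Lemma That_leafy st a xi : rule TH st a xi -> leafy xi.
Proof. by case=> xi1 [_ []]. Qed.

Lemma translated_inst_T1 ss w (xi1 : rhs Q1 Dl) S xi t :
  (forall i q S t, i < size ss -> runs TH (q, S) (nth w ss i) t -> runs T1 q (nth w ss i) t) ->
  rhs_wf rkD (size ss) xi1 -> bigstep extA (call S xi1) (embed xi) ->
  bigstep TH (inst ss w xi) (tmap inl t) -> bigstep T1 (inst ss w xi1) (tmap inl t).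
Proof.
move=> IHss; elim/tree_ind_nested: xi1 S xi t => [[d|[q i]] ts1 IH] S xi t /=; last first.
  case/andP=> lt_i /nilP-> tr; have [ch eq_xi] := translate_dom_leafE tr.
  by rewrite eq_xi; apply: IHss.
case/andP=> /eqP sz_ts1 wf_ts1 tr.
have [Ss [xis [sz_Ss -> sz_xis tr_xis]]] := translate_dom_nodeE sz_ts1 tr.
move=> run; have [ts eq_t /Forall2_nthP[sz_ts ts_ok]] := bigstep_inst_inlE run; subst t.
apply/bigstep_node/Forall2_nthP; rewrite !size_map -sz_ts sz_xis sz_Ss -sz_ts1.
split=> // j x0 y0 lt_j; have lt_jS : j < size Ss by rewrite sz_Ss -sz_ts1.
rewrite (nth_map (Node (inl d) ts1)) ?(nth_map (Node d ts)) -?sz_ts ?sz_xis //.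
apply: IH (In_nth _ lt_j) _ _ _ _ (tr_xis j _ (Node (inl d) xis) lt_jS) _.
  exact: all_In wf_ts1 (In_nth _ lt_j).
by apply: ts_ok; rewrite sz_xis.
Qed.

Lemma That_runs_T1 q S s t : wr rkS s -> runs TH (q, S) s t -> runs T1 q s t.
Proof.
elim/tree_ind_nested: s q S t => a ss IH q S t /= /andP[/eqP sz_ss wr_ss] run.
have [xi [xi1 [r1 [_ /bigstepP tr]]] run_xi] := runs_NodeE run.
apply: (bigstep_call r1); apply: translated_inst_T1 tr run_xi.
  move=> i q' S' t' lt_i; apply: IH; [exact: In_nth | exact: all_In wr_ss (In_nth _ lt_i)].
by rewrite sz_ss; apply: T1_wf r1.
Qed.

Definition realized_by cs c (x : sform Q2 (Dl + ST * nat) Om) (u : tree Om)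
    (g : rhs (MQ Q1 Q2) Om) :=
  [/\ leafy (rmap_val g), bigstep ext2 x (embed (rmap_val g))
    & bigstep MT (inst cs c g) (tmap inl u)].

Definition realizes cs c x u := exists g, realized_by cs c x u g.

Lemma realizes_node cs c o xs us :
  List.Forall2 (realizes cs c) xs us -> realizes cs c (Node (inl o) xs) (Node o us).
Proof.
move=> /Forall2_nthP[sz_us xs_us].
have [gs [sz_gs gs_ok]] := nth_choice
  (R := fun i => realized_by cs c (nth (Node (inl o) xs) xs i) (nth (Node o us) us i))
  (fun i => xs_us i _ _).
exists (Node (inl o) gs); split.
- rewrite /rmap_val /=; apply/(all_nthP (tmap inl (Node o us))) => i.
  rewrite size_map sz_gs => lt_i; rewrite (nth_map (Node (inl o) gs)) ?sz_gs //.
  by case: (gs_ok i (Node (inl o) gs) lt_i).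
- apply/bigstep_node/Forall2_nthP; rewrite !size_map sz_gs; split=> // i x0 y0 lt_i.
  rewrite -map_comp (nth_map (Node (inl o) gs)) ?sz_gs // (set_nth_default (Node (inl o) xs)) //.
  by case: (gs_ok i (Node (inl o) gs) lt_i).
- apply/bigstep_node/Forall2_nthP; rewrite !size_map sz_gs; split=> // i x0 y0 lt_i.
  rewrite (nth_map (Node (inl o) gs)) ?sz_gs // (nth_map (Node o us)) -?sz_us //.
  by case: (gs_ok i (Node (inl o) gs) lt_i).
Qed.

Lemma translate_inst (ts : seq (tree Dl)) w (xis : seq (rhs ST Dl)) wx cs c xi2 u :
  bigstep T2 (inst ts w xi2) (tmap inl u) ->
  (forall p j u', occurs (inr (p, j)) xi2 -> runs T2 p (nth w ts j) u' ->
     realizes cs c (call p (nth wx xis j)) u') ->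
  realizes cs c (inst xis wx xi2) u.
Proof.
move: xi2 u; apply: bigstep_inst_ind => [p j ch u run|o xs us /Forall2_nthP[sz_us Pxs]] real.
  exact: real (occ_here _ _) run.
apply/realizes_node/Forall2_nthP; rewrite size_map; split=> // i x0 y0 lt_i.
rewrite (nth_map (Node (inl o) xs)) //; apply: (Pxs i _ _ lt_i) => p j u' occ.
by apply: real; apply: occ_sub (In_nth _ lt_i) occ.
Qed.

Definition simulation (s : tree Sg) : Prop :=
  forall q t, runs T1 q s t ->
  forall R : Q2 -> tree Om -> Prop, (forall p u, R p u -> runs T2 p t u) ->
  runs TH (q, states_of R) s t /\
  forall (x : MQ Q1 Q2) p u, val x = (q, states_of R, p) -> R p u ->
    runs MT x (la_relabel TH s) u.

Section NodeSimulation.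
Variables (a : Sg) (ss : seq (tree Sg)).
Hypothesis sz_ss : size ss = rkS a.
Hypothesis IHss : forall i, i < size ss -> simulation (nth (Node a ss) ss i).

Local Notation w := (Node a ss).
Local Notation cs := (map (la_relabel TH) ss).
Local Notation c := (la_relabel TH (Node a ss)).

Definition rhs_simulation (xi1 : rhs Q1 Dl) : Prop :=
  forall t, bigstep T1 (inst ss w xi1) (tmap inl t) ->
  forall R : Q2 -> tree Om -> Prop, (forall p u, R p u -> runs T2 p t u) ->
  exists2 xi : rhs ST Dl,
    [/\ leafy xi, bigstep extA (call (states_of R) xi1) (embed xi)
      & bigstep TH (inst ss w xi) (tmap inl t)]
    & forall p u, R p u -> realizes cs c (call p xi) u.

Lemma rhs_simulation_leaf q i : i < rkS a -> rhs_simulation (Node (inr (q, i)) [::]).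
Proof.
rewrite -sz_ss => lt_i t run R R_runs; have [TH_run M_runs] := IHss lt_i run R_runs.
exists (Node (inr ((q, states_of R), i)) [::]); first by split=> //; apply: bigstep_refl.
move=> p u Rpu; have p_in : p \in states_of R by apply/states_ofP; exists u.
pose x : MQ Q1 Q2 := exist _ (q, states_of R, p) p_in.
exists (Node (inr (x, i)) [::]); split=> //; first exact: bigstep_refl.
by rewrite /= (nth_map w) //; apply: M_runs.
Qed.

Lemma rhs_simulation_node d ts1 : size ts1 = rkD d ->
  (forall j, j < size ts1 -> rhs_simulation (nth (Node (inl d) ts1) ts1 j)) ->
  rhs_simulation (Node (inl d) ts1).
Proof.
move=> sz_ts1 IHts t run R R_runs.
have [ts eq_t /Forall2_nthP[sz_ts ts_ok]] := bigstep_inst_inlE run; subst t.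
pose Ss := child_states (states_of R) (used_rules T2 R d ts) (size ts1).
pose Rj j p' u' := p' \in nth set0 Ss j /\ runs T2 p' (nth (Node d ts) ts j) u'.
have states_Rj j : j < size ts1 -> states_of (Rj j) = nth set0 Ss j.
  move=> lt_j; apply/setP => p'; apply/states_ofP/idP => [[u' []] // | p'_in].
  by have [u' run'] := child_states_runs T2_leafy lt_j p'_in; exists u'.
have /nth_choice[xis [sz_xis xis_ok]] : forall j, j < size ts1 -> exists xi,
  [/\ leafy xi, bigstep extA (call (nth set0 Ss j) (nth (Node (inl d) ts1) ts1 j)) (embed xi),
      bigstep TH (inst ss w xi) (tmap inl (nth (Node d ts) ts j))
    & forall p u, Rj j p u -> realizes cs c (call p xi) u].
  move=> j lt_j; rewrite -states_Rj //.
  have Rj_runs p u : Rj j p u -> runs T2 p (nth (Node d ts) ts j) u by case.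
  by have [xi [? ? ?] ?] := IHts j lt_j _ (ts_ok j _ _ lt_j) (Rj j) Rj_runs; exists xi.
have sz_Ss : size Ss = size ts1 by rewrite size_mkseq.
exists (Node (inl d) xis); first split.
- apply/(all_nthP (Node (inl d) xis)) => j; rewrite sz_xis => lt_j.
  by case: (xis_ok j (Node (inl d) xis) lt_j).
- apply: (translate_dom_node (Ss := Ss)); rewrite ?sz_Ss //.
    by apply: dom_rule_used_rules => p /states_ofP[u Rpu]; exists u => //; apply: R_runs.
  move=> j x0 y0 lt_j; rewrite (set_nth_default (Node (inl d) ts1)) //.
  rewrite (set_nth_default (Node (inl d) xis)) ?sz_xis //.
  by case: (xis_ok j (Node (inl d) xis) lt_j).
- apply/bigstep_node/Forall2_nthP; rewrite !size_map sz_xis; split=> // j x0 y0 lt_j.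
  rewrite (nth_map (Node (inl d) xis)) ?sz_xis // (nth_map (Node d ts)) -?sz_ts //.
  by case: (xis_ok j (Node (inl d) xis) lt_j).
move=> p u Rpu; have [xi2 r run2] := runs_NodeE (R_runs p u Rpu).
have [|g [leafy_g tr M_run]] :=
  translate_inst (xis := xis) (wx := Node (inl d) xis) (cs := cs) (c := c) run2.
  move=> p' j u' occ run'; have lt_j : j < size ts1.
    by rewrite sz_ts1; apply: occurs_rhs_wf occ (T2_wf r).
  case: (xis_ok j (Node (inl d) xis) lt_j) => _ _ _; apply; split=> //.
  apply/(nth_child_states _ _ _ lt_j); exists p; split; first by apply/states_ofP; exists u.
  by exists xi2; split=> //; exists u.
by exists g; split=> //; apply: (bigstep_call (xi := xi2)).
Qed.

Lemma rhs_wf_simulation xi1 : rhs_wf rkD (rkS a) xi1 -> rhs_simulation xi1.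
Proof.
elim/tree_ind_nested: xi1 => [[d|[q i]] ts1 IH] /= /andP[]; last first.
  by move=> lt_i /nilP->; apply: rhs_simulation_leaf.
move=> /eqP sz_ts1 wf_ts1; apply: rhs_simulation_node => // j lt_j.
by apply: IH; [exact: In_nth | exact: all_In wf_ts1 (In_nth _ lt_j)].
Qed.

End NodeSimulation.

Lemma simulation_wr s : wr rkS s -> simulation s.
Proof.
elim/tree_ind_nested: s => a ss IH /= /andP[/eqP sz_ss wr_ss] q t run R R_runs.
have IHss i : i < size ss -> simulation (nth (Node a ss) ss i).
  by move=> lt_i; apply: IH; [exact: In_nth | exact: all_In wr_ss (In_nth _ lt_i)].
have [xi1 r1 run1] := runs_NodeE run.
have [xi [leafy_xi tr TH_run] M_ok] := rhs_wf_simulation sz_ss IHss (T1_wf r1) run1 R_runs.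
have r : rule TH (q, states_of R) a xi by exists xi1; split=> //; split=> //; apply/bigstepP.
split=> [|x p u val_x Rpu]; first exact: (bigstep_call r).
have [g [leafy_g tr_g M_run]] := M_ok p u Rpu.
apply: (bigstep_call (xi := g)) M_run; rewrite /= /M_rule val_x.
split; first by rewrite size_map.
exists xi; split=> //; split; first by split=> //; apply/bigstepP.
move=> i st; rewrite size_map => lt_i occ; rewrite (nth_map (Node a ss)) //.
by apply/states_ofP; apply: runs_of_occurs TH_run leafy_xi occ.
Qed.

End Composition.

Theorem lemma4 (Q1 Q2 Sigma Delta Omega : finType)
    (rkS : Sigma -> nat) (rkD : Delta -> nat) (rkO : Omega -> nat)
    (T1 : tdtt Q1 Sigma Delta) (T2 : tdtt Q2 Delta Omega) :
  wf_tdtt rkS rkD T1 -> wf_tdtt rkD rkO T2 ->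
  forall (s : tree Sigma) (u : tree Omega),
    (exists t : tree Delta,
        tdtt_rel rkS rkD (That rkD T1 T2) s t /\ tdtt_rel rkD rkO T2 t u) ->
    la_rel rkS rkO (M rkS rkD T1 T2) s u.
Proof.
move=> [T1_wf _] [T2_wf _] s u [t [[wr_s [_ /derivesP run1]] [_ [wr_u /derivesP run2]]]].
split=> //; split=> //; exists (la_relabel (That rkD T1 T2) s).
split; first by apply: relab_la_relabel wr_s => st a xi; apply: That_leafy.
pose R p u' := p = init T2 /\ u' = u.
have R_runs p u' : R p u' -> runs T2 p t u' by case=> -> ->.
have [_ M_runs] := simulation_wr T1_wf T2_wf wr_s (That_runs_T1 T1_wf wr_s run1) R_runs.
have states_R : states_of R = [set init T2].
  by apply/setP=> p; rewrite in_set1; apply/states_ofP/eqP => [[? []] | ->]; last exists u.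
by apply/derivesP; apply: M_runs (MQ0 T1 T2) _ _ _ (conj erefl erefl); rewrite states_R.
Qed.
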